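(* Let $f,a,b,h_{1},h_{2}\in\mathbb{C}[x]$ be nonzero polynomials satisfying \[ b(x)=-h_{1}(x)h_{2}(x),\qquad f(x)a(x)=f(x-1)h_{1}(x)+f(x+1)h_{2}(x+1). \] Let $d=\max\{\deg(a),\deg(h_{1}),\deg(h_{2})\}$, $d_{f}=\deg(f)$, and write $a(x)=\sum_{i=0}^{d}a^{(i)}x^{i}$, $h_{1}(x)=\sum_{i=0}^{d}h_{1}^{(i)}x^{i}$, $h_{2}(x)=\sum_{i=0}^{d}h_{2}^{(i)}x^{i}$. Let $c_{1},c_{2}$ be the leading coefficients of $h_{1},h_{2}$, and $A,B$ the leading coefficients of $a,b$. Then: (1) If $\deg(a)=\deg(h_{1})>\deg(h_{2})$, then $c_{1}=A$, $c_{2}=-\frac{B}{A}$ and $d_{f}=\frac{a^{(d-1)}-h_{1}^{(d-1)}-h_{2}^{(d-1)}}{-A}$. (2) If $\deg(a)=\deg(h_{2})>\deg(h_{1})$, then $c_{1}=-\frac{B}{A}$, $c_{2}=A$ and $d_{f}=\frac{a^{(d-1)}-h_{1}^{(d-1)}-h_{2}^{(d-1)}-dA}{A}$. (3) If $\deg(h_{1})=\deg(h_{2})>\deg(a)$, then $\{c_{1},c_{2}\}=\{\sqrt{B},-\sqrt{B}\}$ and $d_{f}=\frac{a^{(d-1)}-h_{1}^{(d-1)}-h_{2}^{(d-1)}-dh_{2}^{(d)}}{h_{2}^{(d)}-h_{1}^{(d)}}$. (4) If $\deg(h_{1})=\deg(h_{2})=\deg(a)$, then $c_{1},c_{2}$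 are the roots of $x^{2}-Ax-B=0$, and: (a) if $c=c_{1}=c_{2}$ (so $B=-c^{2}$, $A=2c$), then $d_{f}$ is a solution of \[ \left(a^{(d-2)}-h_{1}^{(d-2)}-\left(h_{2}^{(d-2)}+(d-1)h_{2}^{(d-1)}+\tbinom{d}{2}h_{2}^{(d)}\right)\right)+d_{f}\left(h_{1}^{(d-1)}-\left(h_{2}^{(d-1)}+dh_{2}^{(d)}\right)\right)-\tbinom{d_{f}}{2}A=0; \] (b) otherwise $d_{f}=\frac{a^{(d-1)}-h_{1}^{(d-1)}-h_{2}^{(d-1)}-dh_{2}^{(d)}}{h_{2}^{(d)}-h_{1}^{(d)}}$.
   Context: Coefficients $a^{(i)},h_1^{(i)},h_2^{(i)}$ with $i<0$ are taken to be $0$. *)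

From HB Require Import structures.
From mathcomp Require Import all_boot all_order all_algebra.
Set Implicit Arguments. Unset Strict Implicit. Unset Printing Implicit Defensive.
Import Order.TTheory GRing.Theory Num.Theory.
Local Open Scope ring_scope.

(* degree of a polynomial: deg p = size p - 1 (only used for nonzero p) *)
Definition deg {R : nzRingType} (p : {poly R}) : nat := (size p).-1.

Definition coefz {R : nzRingType} (p : {poly R}) (i : int) : R :=
  match i with
  | Posz n => p`_n
  | Negz _ => 0
  end.

From HB Require Import structures.
From mathcomp Require Import all_boot all_order all_algebra.
From mathcomp Require Import zify ring.
Import Order.TTheory GRing.Theory Num.Theory.
Local Open Scope ring_scope.
Set Implicit Arguments.
Unset Strict Implicit.

(* Let n = deg f and let d bound the degrees of a, h1, h2.  Reversing every
   polynomial with respect to its degree bound turns the top coefficients of the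
   functional equation into its lowest ones, where the product and the shifts
   p(x +- 1) are easy to expand.  Comparing the coefficients of x^(n+d), x^(n+d-1)
   and x^(n+d-2), and dividing by the leading coefficient of f, gives
     a^(d) = h1^(d) + h2^(d),
     a^(d-1) = h1^(d-1) + h2^(d-1) + d h2^(d) + n (h2^(d) - h1^(d)),
   and, when h1^(d) = h2^(d), a quadratic relation for n.  The four cases only
   differ in which of a^(d), h1^(d), h2^(d) are leading coefficients and which
   vanish, together with B = -c1 c2. *)

Section Reversal.
Variable R : nzRingType.

(* For [size p <= m.+1], [revp m p] is the reversal [x^m p(1/x)]. *)
Definition revp (m : nat) (p : {poly R}) : {poly R} := \poly_(i < m.+1) p`_(m - i).

Lemma coef_revp m p k : (revp m p)`_k = if (k <= m)%N then p`_(m - k) else 0.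
Proof. by rewrite coef_poly ltnS. Qed.

Fact revp_is_semilinear m : semilinear (revp m).
Proof.
split=> [c p|p q]; apply/polyP=> k; rewrite !(coefZ, coefD, coef_revp).
  by case: ifP; rewrite ?mulr0.
by case: ifP; rewrite ?addr0.
Qed.
HB.instance Definition _ m :=
  GRing.isSemilinear.Build R {poly R} {poly R} _ (revp m) (revp_is_semilinear m).

Lemma revpXn m s : (s <= m)%N -> revp m 'X^s = 'X^(m - s).
Proof.
move=> le_sm; apply/polyP=> k; rewrite coef_revp !coefXn.
case: leqP => [le_km|lt_mk]; last by case: eqP => //; lia.
by congr (_%:R); apply/eqP; case: eqP; case: eqP => //; lia.
Qed.

Lemma poly_expand_le n (p : {poly R}) : (size p <= n)%N -> p = \sum_(i < n) p`_i *: 'X^i.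
Proof.
move=> le_pn; rewrite -poly_def; apply/polyP=> k; rewrite coef_poly.
by case: ltnP => // le_nk; rewrite nth_default // (leq_trans le_pn).
Qed.

Lemma revp_coef0 m p : (revp m p)`_0 = p`_m.
Proof. by rewrite coef_revp subn0. Qed.

Lemma revp_coef0_deg m p : deg p = m -> (revp m p)`_0 = lead_coef p.
Proof. by rewrite revp_coef0 lead_coefE => <-. Qed.

Lemma revp_coef0_lt_deg m p : (deg p < m)%N -> (revp m p)`_0 = 0.
Proof. by rewrite revp_coef0 /deg => lt_pm; rewrite nth_default //; case: (size p) lt_pm. Qed.

Lemma size_deg (p : {poly R}) : p != 0 -> size p = (deg p).+1.
Proof. by move=> p_neq0; rewrite /deg (polySpred p_neq0). Qed.

Lemma coefz_revp m k (p : {poly R}) : coefz p (m%:Z - k%:Z) = (revp m p)`_k.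
Proof.
rewrite coef_revp; case: leqP => [le_km|lt_mk]; first by rewrite subzn.
by rewrite -opprB subzn ?(ltnW lt_mk) // -(subnSK lt_mk).
Qed.

End Reversal.

Arguments revp {R} m p.

Lemma revpM (R : comNzRingType) n d (p q : {poly R}) :
  (size p <= n.+1)%N -> (size q <= d.+1)%N -> revp (n + d) (p * q) = revp n p * revp d q.
Proof.
move=> /poly_expand_le -> /poly_expand_le ->.
rewrite big_distrlr !linear_sum big_distrlr /=; apply: eq_bigr => i _.
rewrite linear_sum; apply: eq_bigr => j _.
have [le_in le_jd] : (i <= n /\ j <= d)%N by split; rewrite -ltnS.
rewrite -scalerAr -scalerAl !linearZ /= -scalerAr -scalerAl -exprD.
by rewrite !revpXn ?leq_add // -exprD; congr (_ *: (_ *: 'X^_)); lia.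
Qed.

Section Shift.
Context {R : comNzRingType} (t : R).

Lemma coef_XaddCn j i : (('X + t%:P) ^+ j)`_i = t ^+ (j - i) *+ 'C(j, i).
Proof.
rewrite addrC exprDn coef_sum.
under eq_bigr => l _ do rewrite coefMn -rmorphXn coefCM coefXn mulr_natr mulrb
  eq_sym (fun_if (fun x => x *+ _)) mul0rn.
rewrite -big_mkcond (big_ord1_eq _ (fun l => t ^+ (j - l) *+ 'C(j, l))).
case: ltnP => // lt_ji.
by rewrite bin_small.
Qed.

Lemma coef_revp_comp_XaddC n (f : {poly R}) k : (size f <= n.+1)%N ->
  (revp n (f \Po ('X + t%:P)))`_k =
  \sum_(u < k.+1) (revp n f)`_u * (t ^+ (k - u) *+ 'C(n - u, k - u)).
Proof.
(* Both sides are linear in [f]: reduce to the monomials ['X^j], [j <= n]. *)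
move=> /poly_expand_le ->.
under [RHS]eq_bigr do rewrite !linear_sum coef_sum mulr_suml.
rewrite exchange_big !linear_sum coef_sum; apply: eq_bigr => j _ /=.
rewrite !linearZ /= (rmorphXn (comp_poly _)) /= comp_polyX coefZ.
under eq_bigr do rewrite coefZ -mulrA.
rewrite -mulr_sumr; congr (_ * _).
have le_jn : (j <= n)%N by rewrite -ltnS.
under eq_bigr => u _ do rewrite revpXn // coefXn mulr_natl mulrb.
rewrite -big_mkcond (big_ord1_eq _ (fun u => t ^+ (k - u) *+ 'C(n - u, k - u))).
rewrite coef_revp coef_XaddCn subKn //.
case: leqP => ?; case: ltnP => // ?.
1,2: by rewrite bin_small ?mulr0n //; lia.
by rewrite -bin_sub; [congr (t ^+ _ *+ 'C(j, _)) | ]; lia.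
Qed.

Lemma coef012_revp_comp_XaddC n (f : {poly R}) : (size f <= n.+1)%N ->
  [/\ (revp n (f \Po ('X + t%:P)))`_0 = (revp n f)`_0,
      (revp n (f \Po ('X + t%:P)))`_1 = (revp n f)`_1 + n%:R * t * (revp n f)`_0
    & (revp n (f \Po ('X + t%:P)))`_2 =
      (revp n f)`_2 + (n%:R - 1) * t * (revp n f)`_1 + 'C(n, 2)%:R * t ^+ 2 * (revp n f)`_0].
Proof.
move=> le_fn; rewrite !coef_revp_comp_XaddC // !big_ord_recr !big_ord0 /=.
rewrite !subnn !subn0 !bin0 !bin1 subSS subn0 !expr0 !expr1 !mulr1n !add0r.
(* [n - 1] is truncated, but for [n = 0] the coefficient [(revp n f)`_1] vanishes. *)
have -> : (revp n f)`_1 * (t *+ (n - 1)) = (n%:R - 1) * t * (revp n f)`_1.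
  case: n le_fn => [|n] _; first by rewrite coef_revp /= mul0r mulr0.
  by rewrite subSS subn0 -natr1 addrK; ring.
by split; ring.
Qed.
End Shift.

Section TopCoefficients.
Variables (K : fieldType) (n d : nat) (f a h1 h2 : {poly K}).
Hypotheses (size_f : size f = n.+1) (size_a : (size a <= d.+1)%N)
  (size_h1 : (size h1 <= d.+1)%N) (size_h2 : (size h2 <= d.+1)%N).
Hypothesis feq : f * a = (f \Po ('X - 1)) * h1 + (f \Po ('X + 1)) * (h2 \Po ('X + 1)).

Local Notation F k := (revp n f)`_k.
Local Notation A k := (revp d a)`_k.
Local Notation P k := (revp d h1)`_k.
Local Notation Q k := (revp d h2)`_k.

Lemma revp_feq : revp n f * revp d a =
  revp n (f \Po ('X + (-1)%:P)) * revp d h1 + revp n (f \Po ('X + 1%:P)) * revp d (h2 \Po ('X + 1%:P)).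
Proof.
have size_shift (g : {poly K}) t : size (g \Po ('X + t%:P)) = size g.
  by rewrite size_comp_poly2 // size_XaddC.
by rewrite -!revpM ?size_shift ?size_f // -linearD polyCN polyC1 -feq.
Qed.

Lemma top_coef_equations :
  [/\ F 0 * A 0 = F 0 * (P 0 + Q 0),
      F 0 * A 1 + F 1 * A 0 =
        F 0 * P 1 + (F 1 - n%:R * F 0) * P 0 + F 0 * (Q 1 + d%:R * Q 0) + (F 1 + n%:R * F 0) * Q 0
    & F 0 * A 2 + F 1 * A 1 + F 2 * A 0 =
        F 0 * P 2 + (F 1 - n%:R * F 0) * P 1
        + (F 2 - (n%:R - 1) * F 1 + 'C(n, 2)%:R * F 0) * P 0
        + F 0 * (Q 2 + (d%:R - 1) * Q 1 + 'C(d, 2)%:R * Q 0)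
        + (F 1 + n%:R * F 0) * (Q 1 + d%:R * Q 0)
        + (F 2 + (n%:R - 1) * F 1 + 'C(n, 2)%:R * F 0) * Q 0].
Proof.
have le_fn : (size f <= n.+1)%N by rewrite size_f.
have [fm0 fm1 fm2] := coef012_revp_comp_XaddC (-1) le_fn.
have [fp0 fp1 fp2] := coef012_revp_comp_XaddC 1 le_fn.
have [hp0 hp1 hp2] := coef012_revp_comp_XaddC 1 size_h2.
have coef_feq k := congr1 (fun p : {poly K} => p`_k) revp_feq.
move: (coef_feq 0%N) (coef_feq 1%N) (coef_feq 2%N) => /=.
rewrite !coefD !coefM !big_ord_recr !big_ord0 /=.
rewrite fm0 fm1 fm2 fp0 fp1 fp2 hp0 hp1 hp2 => e0 e1 e2.
by split; [move: e0 | move: e1 | move: e2] => e; apply: etrans (etrans e _); ring.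
Qed.

Let lead_f_neq0 : F 0 != 0.
Proof.
have /revp_coef0_deg -> : deg f = n by rewrite /deg size_f.
by rewrite lead_coef_eq0 -size_poly_eq0 size_f.
Qed.

Lemma lead_balance : A 0 = P 0 + Q 0.
Proof. by have [e0 _ _] := top_coef_equations; apply: (mulfI lead_f_neq0). Qed.

Lemma sublead_balance : A 1 = P 1 + Q 1 + d%:R * Q 0 + n%:R * (Q 0 - P 0).
Proof.
have [_ e1 _] := top_coef_equations; apply: (mulfI lead_f_neq0).
by apply: (addIr (F 1 * A 0)); rewrite e1 lead_balance; ring.
Qed.

Lemma second_balance : P 0 = Q 0 ->
  A 2 - P 2 - (Q 2 + (d%:R - 1) * Q 1 + 'C(d, 2)%:R * Q 0)
  + n%:R * (P 1 - (Q 1 + d%:R * Q 0)) - 'C(n, 2)%:R * A 0 = 0.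
Proof.
move=> PQ; have [_ _ /eqP] := top_coef_equations; rewrite -subr_eq0 => /eqP e2.
apply: (mulfI lead_f_neq0); rewrite mulr0 -[RHS]e2.
by rewrite sublead_balance lead_balance PQ; ring.
Qed.

Lemma deg_formula : P 0 != Q 0 ->
  n%:R = (A 1 - P 1 - Q 1 - d%:R * Q 0) / (Q 0 - P 0).
Proof.
by rewrite eq_sym -subr_eq0 => PQ; rewrite sublead_balance; field.
Qed.

Local Notation c1 := (lead_coef h1).
Local Notation c2 := (lead_coef h2).
Local Notation lA := (lead_coef a).
Local Notation B := (lead_coef (- (h1 * h2))).

Lemma dominant_h1 : h1 != 0 -> deg a = d -> deg h1 = d -> (deg h2 < d)%N ->
  [/\ c1 = lA, c2 = - (B / lA) & n%:R = (A 1 - P 1 - Q 1) / - lA].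
Proof.
move=> h1_neq0 /revp_coef0_deg A0 /revp_coef0_deg P0 /revp_coef0_lt_deg Q0.
have c1_neq0 : c1 != 0 by rewrite lead_coef_eq0.
have c1E : c1 = lA by rewrite -A0 -P0 lead_balance Q0 addr0.
split=> //; first by rewrite lead_coefN lead_coefM -c1E; field.
rewrite deg_formula; last by rewrite P0 Q0.
by rewrite P0 Q0 c1E mulr0 subr0 sub0r.
Qed.

Lemma dominant_h2 : h2 != 0 -> deg a = d -> deg h2 = d -> (deg h1 < d)%N ->
  [/\ c1 = - (B / lA), c2 = lA & n%:R = (A 1 - P 1 - Q 1 - d%:R * lA) / lA].
Proof.
move=> h2_neq0 /revp_coef0_deg A0 /revp_coef0_deg Q0 /revp_coef0_lt_deg P0.
have c2_neq0 : c2 != 0 by rewrite lead_coef_eq0.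
have c2E : c2 = lA by rewrite -A0 -Q0 lead_balance P0 add0r.
split=> //; first by rewrite lead_coefN lead_coefM -c2E; field.
rewrite deg_formula; last by rewrite P0 Q0 eq_sym.
by rewrite P0 Q0 c2E subr0.
Qed.

Lemma dominant_h1h2 : (2%:R != 0 :> K) -> h1 != 0 ->
  deg h1 = d -> deg h2 = d -> (deg a < d)%N ->
  c2 = - c1 /\ n%:R = (A 1 - P 1 - Q 1 - d%:R * Q 0) / (Q 0 - P 0).
Proof.
move=> two_neq0 h1_neq0 /revp_coef0_deg P0 /revp_coef0_deg Q0 /revp_coef0_lt_deg A0.
have c2E : c2 = - c1 by apply/eqP; rewrite -addr_eq0 addrC -P0 -Q0 -lead_balance A0.
split=> //; apply: deg_formula.
rewrite P0 Q0 c2E -subr_eq0 opprK -mulr2n -mulr_natl mulf_neq0 //.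
by rewrite lead_coef_eq0.
Qed.

Lemma equal_degrees : deg h1 = d -> deg h2 = d -> deg a = d ->
  [/\ 'X ^+ 2 - lA *: 'X - B%:P = ('X - c1%:P) * ('X - c2%:P),
      (forall c, c = c1 -> c = c2 ->
         [/\ B = - c ^+ 2, lA = 2%:R * c &
             A 2 - P 2 - (Q 2 + (d%:R - 1) * Q 1 + 'C(d, 2)%:R * Q 0)
             + n%:R * (P 1 - (Q 1 + d%:R * Q 0)) - 'C(n, 2)%:R * lA = 0]) &
      (c1 != c2 -> n%:R = (A 1 - P 1 - Q 1 - d%:R * Q 0) / (Q 0 - P 0))].
Proof.
move=> /revp_coef0_deg P0 /revp_coef0_deg Q0 /revp_coef0_deg A0.
have lAE : lA = c1 + c2 by rewrite -A0 -P0 -Q0 lead_balance.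
split.
- by rewrite lead_coefN lead_coefM lAE -mul_polyC rmorphN rmorphM rmorphD /=; ring.
- move=> c c1E c2E; split.
  + by rewrite lead_coefN lead_coefM -c1E -c2E; ring.
  + by rewrite lAE -c1E -c2E; ring.
  + by rewrite -A0 second_balance // P0 Q0 -c1E -c2E.
- by move=> c1_neq_c2; apply: deg_formula; rewrite P0 Q0.
Qed.

End TopCoefficients.

Lemma sqrtC_opp_pair (C : numClosedFieldType) (x y : C) : y = - x ->
  let s := sqrtC (- (x * y)) in (x = s /\ y = - s) \/ (x = - s /\ y = s).
Proof.
move=> -> s; have : x ^+ 2 == s ^+ 2 by rewrite sqrtCK mulrN opprK expr2.
by rewrite eqf_sqr => /orP[] /eqP ->; [left | right]; rewrite ?opprK.
Qed.

Theorem theorem30 (C : numClosedFieldType) (f a b h1 h2 : {poly C}) :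
  f != 0 -> a != 0 -> b != 0 -> h1 != 0 -> h2 != 0 ->
  b = - (h1 * h2) ->
  f * a = (f \Po ('X - 1)) * h1 + (f \Po ('X + 1)) * (h2 \Po ('X + 1)) ->
  let d := maxn (deg a) (maxn (deg h1) (deg h2)) in
  let df := deg f in
  let c1 := lead_coef h1 in
  let c2 := lead_coef h2 in
  let A := lead_coef a in
  let B := lead_coef b in
  let a_ i := coefz a i in
  let h1_ i := coefz h1 i in
  let h2_ i := coefz h2 i in
  (* (1) *)
  ((deg a = deg h1 /\ (deg h2 < deg h1)%N) ->
     [/\ c1 = A, c2 = - (B / A) &
         df%:R = (a_ (d%:Z - 1) - h1_ (d%:Z - 1) - h2_ (d%:Z - 1)) / (- A)]) /\
  (* (2) *)
  ((deg a = deg h2 /\ (deg h1 < deg h2)%N) ->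
     [/\ c1 = - (B / A), c2 = A &
         df%:R = (a_ (d%:Z - 1) - h1_ (d%:Z - 1) - h2_ (d%:Z - 1) - d%:R * A) / A]) /\
  (* (3) *)
  ((deg h1 = deg h2 /\ (deg a < deg h1)%N) ->
     ((c1 = sqrtC B /\ c2 = - sqrtC B) \/ (c1 = - sqrtC B /\ c2 = sqrtC B)) /\
     df%:R = (a_ (d%:Z - 1) - h1_ (d%:Z - 1) - h2_ (d%:Z - 1) - d%:R * h2_ d%:Z)
             / (h2_ d%:Z - h1_ d%:Z)) /\
  (* (4) *)
  ((deg h1 = deg h2 /\ deg h2 = deg a) ->
     [/\ 'X ^+ 2 - A *: 'X - B%:P = ('X - c1%:P) * ('X - c2%:P),
         (* (a) *)
         (forall c, c = c1 -> c = c2 ->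
            [/\ B = - c ^+ 2, A = 2%:R * c &
              (a_ (d%:Z - 2) - h1_ (d%:Z - 2)
                 - (h2_ (d%:Z - 2) + (d%:R - 1) * h2_ (d%:Z - 1) + ('C(d, 2))%:R * h2_ d%:Z))
              + df%:R * (h1_ (d%:Z - 1) - (h2_ (d%:Z - 1) + d%:R * h2_ d%:Z))
              - ('C(df, 2))%:R * A = 0]) &
         (* (b) *)
         (c1 != c2 ->
            df%:R = (a_ (d%:Z - 1) - h1_ (d%:Z - 1) - h2_ (d%:Z - 1) - d%:R * h2_ d%:Z)
                    / (h2_ d%:Z - h1_ d%:Z))]).
Proof.
move=> f_neq0 a_neq0 _ h1_neq0 h2_neq0 -> feq d df c1 c2 A B a_ h1_ h2_.
have dE : d = maxn (deg a) (maxn (deg h1) (deg h2)) by [].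
have coefz_d (p : {poly C}) : coefz p d%:Z = (revp d p)`_0 by rewrite revp_coef0.
rewrite /a_ /h1_ /h2_ !(coefz_revp _ 1) !(coefz_revp _ 2) !coefz_d.
have size_f : size f = df.+1 by rewrite size_deg.
have [size_a size_h1 size_h2] : [/\ size a <= d.+1, size h1 <= d.+1 & size h2 <= d.+1]%N.
  by rewrite !size_deg // dE; split; lia.
have two_neq0 : 2%:R != 0 :> C by rewrite pnatr_eq0.
split; [|split; [|split]] => -[deg_eq deg_lt].
- have [] : [/\ deg a = d, deg h1 = d & deg h2 < d]%N by rewrite dE; split; lia.
  exact: dominant_h1 size_f size_a size_h1 size_h2 feq h1_neq0.
- have [] : [/\ deg a = d, deg h2 = d & deg h1 < d]%N by rewrite dE; split; lia.
  exact: dominant_h2 size_f size_a size_h1 size_h2 feq h2_neq0.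
- have [] : [/\ deg h1 = d, deg h2 = d & deg a < d]%N by rewrite dE; split; lia.
  move=> h1d h2d ad; have [c2E ->] :=
    dominant_h1h2 size_f size_a size_h1 size_h2 feq two_neq0 h1_neq0 h1d h2d ad.
  by split=> //; rewrite /B lead_coefN lead_coefM; apply: sqrtC_opp_pair.
- have [] : [/\ deg h1 = d, deg h2 = d & deg a = d]%N by rewrite dE; split; lia.
  exact: equal_degrees size_f size_a size_h1 size_h2 feq.
Qed.
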